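(* Fix $p \in (0,1)$ and $c>0$, and for $x>0$ let $\alpha_x := 1-p(1-e^{-cx})$ and $f(x) := (2\alpha_x)^{1/x}$. If $p \le \frac12$, then $f$ is strictly decreasing on $(0,\infty)$. If $p>\frac12$, then there exists $x_* \in (0,\infty)$ such that $f$ is strictly decreasing on $(0,x_*]$ and strictly increasing on $[x_*,\infty)$. *)

From Stdlib Require Import Reals.
Open Scope R_scope.

Definition alpha (p c x : R) : R := 1 - p * (1 - exp (- (c * x))).

(* f(x) = (2 alpha_x)^{1/x}; 2 alpha_x > 0 for p in (0,1), so Rpower is the real power. *)
Definition fA3 (p c x : R) : R := Rpower (2 * alpha p c x) (1 / x).

(* With [h x = ln (2 alpha_x)] we have [f = exp (h x / x)], whose derivative has
   the sign of [N x = x h'(x) - h(x)] ([log2alpha] and [logfA3_dnum] below).  Since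
   [h] is strictly convex, [N' x = x h''(x) > 0], so [N] increases from
   [N 0 = - ln 2 < 0].  If [p <= 1/2] then [2 alpha_x > 1], so [h > 0 > h'] and [N]
   stays negative.  If [p > 1/2] then [h x -> ln (2 (1 - p)) < 0] while
   [x h'(x) -> 0], so [N] becomes positive and its unique zero is [x_*]. *)
From Stdlib Require Import Reals Lra.
From Coquelicot Require Import Coquelicot.
Open Scope R_scope.

Lemma ln_le_sub1 (y : R) : 0 < y -> ln y <= y - 1.
Proof. intro hy. pose proof (exp_ineq1_le (ln y)) as hexp. rewrite exp_ln in hexp; lra. Qed.

Lemma sqr_lt_4exp (u : R) : 0 <= u -> u ^ 2 < 4 * exp u.
Proof.
  intro hu.
  assert (hhalf : u / 2 < exp (u / 2)) by (pose proof (exp_ineq1_le (u / 2)); lra).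
  replace (exp u) with (exp (u / 2) * exp (u / 2)) by (rewrite <- exp_plus; f_equal; lra).
  nra.
Qed.

Lemma is_derive_pos_lt (f f' : R -> R) (x y : R) :
  x < y -> (forall z, x <= z <= y -> is_derive f z (f' z)) ->
  (forall z, x < z < y -> 0 < f' z) -> f x < f y.
Proof.
  intros hxy hder hpos.
  destruct (MVT_cor2 f f' x y hxy) as [z [hmvt hz]].
  - intros z hz. apply is_derive_Reals, hder, hz.
  - pose proof (hpos z hz). nra.
Qed.

Section Monotonicity.

Variables p c : R.
Hypotheses (hp0 : 0 < p) (hp1 : p < 1) (hc : 0 < c).

Lemma alpha_gt_1subp (x : R) : 1 - p < alpha p c x.
Proof. unfold alpha. pose proof (exp_pos (- (c * x))). nra. Qed.

Lemma alpha0 : alpha p c 0 = 1.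
Proof. unfold alpha. rewrite Rmult_0_r, Ropp_0, exp_0. ring. Qed.

Definition log2alpha (x : R) : R := ln (2 * alpha p c x).
Definition log2alpha' (x : R) : R := - (c * p * exp (- (c * x))) / alpha p c x.
Definition log2alpha'' (x : R) : R :=
  c ^ 2 * p * (1 - p) * exp (- (c * x)) / alpha p c x ^ 2.

Definition logfA3 (x : R) : R := 1 / x * log2alpha x.
Definition logfA3_dnum (x : R) : R := x * log2alpha' x - log2alpha x.

Lemma fA3_exp (x : R) : fA3 p c x = exp (logfA3 x).
Proof. reflexivity. Qed.

Lemma log2alpha'_lt0 (x : R) : log2alpha' x < 0.
Proof.
  pose proof (alpha_gt_1subp x). pose proof (exp_pos (- (c * x))).
  unfold log2alpha', Rdiv. rewrite Ropp_mult_distr_l_reverse.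
  apply Ropp_lt_gt_0_contravar, Rmult_lt_0_compat.
  - repeat apply Rmult_lt_0_compat; lra.
  - apply Rinv_0_lt_compat; lra.
Qed.

Lemma log2alpha''_gt0 (x : R) : 0 < log2alpha'' x.
Proof.
  pose proof (alpha_gt_1subp x). pose proof (exp_pos (- (c * x))).
  unfold log2alpha''. apply Rdiv_lt_0_compat; [|apply pow_lt; lra].
  repeat apply Rmult_lt_0_compat; lra.
Qed.

Lemma is_derive_logfA3_dnum (x : R) : is_derive logfA3_dnum x (x * log2alpha'' x).
Proof.
  pose proof (alpha_gt_1subp x).
  unfold logfA3_dnum, log2alpha, log2alpha', log2alpha'', alpha in *.
  auto_derive; [repeat split; lra | field; lra].
Qed.

Lemma is_derive_logfA3 (x : R) : 0 < x -> is_derive logfA3 x (logfA3_dnum x / x ^ 2).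
Proof.
  intro hx. pose proof (alpha_gt_1subp x).
  unfold logfA3, logfA3_dnum, log2alpha, log2alpha', alpha in *.
  auto_derive; [repeat split; lra|].
  set (L := ln _). field. lra.
Qed.

Lemma logfA3_dnum_incr (x y : R) : 0 <= x -> x < y -> logfA3_dnum x < logfA3_dnum y.
Proof.
  intros hx hxy. apply (is_derive_pos_lt _ (fun z => z * log2alpha'' z)); [assumption| |].
  - intros z _. apply is_derive_logfA3_dnum.
  - intros z hz. pose proof (log2alpha''_gt0 z). nra.
Qed.

Lemma logfA3_dnum0_lt0 : logfA3_dnum 0 < 0.
Proof.
  assert (hln2 : 0 < ln 2) by (rewrite <- ln_1; apply ln_increasing; lra).
  unfold logfA3_dnum, log2alpha. rewrite alpha0, Rmult_1_r. lra.
Qed.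

Lemma logfA3_dnum_lt0 (x : R) : p <= 1 / 2 -> 0 <= x -> logfA3_dnum x < 0.
Proof.
  intros hp hx. pose proof (log2alpha'_lt0 x). pose proof (alpha_gt_1subp x).
  assert (hpos : 0 < log2alpha x) by (rewrite <- ln_1; apply ln_increasing; lra).
  unfold logfA3_dnum. nra.
Qed.

(* From [ln y <= y - 1], [alpha > 1 - p], [e^u > u] and [u^2 < 4 e^u] with [u = c x]. *)
Lemma logfA3_dnum_gt (x : R) :
  0 < x -> 2 * p - 1 - (2 * p + 4 * p / (1 - p)) / (c * x) < logfA3_dnum x.
Proof.
  intro hx. set (u := c * x). set (E := exp (- u)).
  assert (hu : 0 < u) by (unfold u; nra).
  assert (hE0 : 0 < E) by apply exp_pos.
  assert (hEu : E * exp u = 1)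
    by (unfold E; rewrite <- exp_plus, Rplus_opp_l, exp_0; reflexivity).
  assert (hE1 : E * u < 1) by (pose proof (exp_ineq1_le u); nra).
  assert (hE2 : E * u ^ 2 < 4)
    by (pose proof (sqr_lt_4exp u (Rlt_le _ _ hu)); unfold E in *; nra).
  pose proof (alpha_gt_1subp x) as ha. fold u E in ha |- *.
  assert (hlog : log2alpha x <= 1 - 2 * p + 2 * p * E).
  { eapply Rle_trans; [apply ln_le_sub1; lra|]. unfold alpha. fold u E. lra. }
  assert (hslope : - (p * (E * u) / (1 - p)) <= x * log2alpha' x).
  { unfold log2alpha'. fold u E.
    replace (x * (- (c * p * E) / alpha p c x)) with (- (p * (E * u) / alpha p c x))
      by (unfold u; field; lra).
    apply Ropp_le_contravar, Rmult_le_compat_l; [apply Rmult_le_pos; [lra | nra]|].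
    apply Rlt_le, Rinv_lt_contravar; nra. }
  assert (hbound : 2 * p * E + p * (E * u) / (1 - p) < (2 * p + 4 * p / (1 - p)) / u).
  { apply (Rmult_lt_reg_r u); [assumption|].
    replace ((2 * p * E + p * (E * u) / (1 - p)) * u)
      with (2 * p * (E * u) + p / (1 - p) * (E * u ^ 2)) by (field; lra).
    replace ((2 * p + 4 * p / (1 - p)) / u * u) with (2 * p + p / (1 - p) * 4) by (field; lra).
    assert (0 < p / (1 - p)) by (apply Rdiv_lt_0_compat; lra).
    nra. }
  unfold logfA3_dnum. lra.
Qed.

Lemma logfA3_dnum_pos_eventually : 1 / 2 < p -> exists b, 0 < b /\ 0 < logfA3_dnum b.
Proof.
  intro hp. set (K := 2 * p + 4 * p / (1 - p)).
  assert (hK : 0 < K).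
  { assert (0 < 4 * p / (1 - p)) by (apply Rdiv_lt_0_compat; lra). unfold K. lra. }
  exists (K / ((2 * p - 1) * c)).
  assert (hb : 0 < K / ((2 * p - 1) * c)) by (apply Rdiv_lt_0_compat; nra).
  split; [assumption|].
  pose proof (logfA3_dnum_gt _ hb) as hgt. fold K in hgt.
  replace (K / (c * (K / ((2 * p - 1) * c)))) with (2 * p - 1) in hgt
    by (field; repeat split; lra).
  lra.
Qed.

Lemma continuous_logfA3_dnum : continuity logfA3_dnum.
Proof.
  intro z. apply continuity_pt_filterlim, (ex_derive_continuous logfA3_dnum).
  eexists. apply is_derive_logfA3_dnum.
Qed.

Lemma logfA3_dnum_root : 1 / 2 < p -> exists xs, 0 < xs /\ logfA3_dnum xs = 0.
Proof.
  intro hp. destruct (logfA3_dnum_pos_eventually hp) as [b [hb hNb]].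
  destruct (IVT _ 0 b continuous_logfA3_dnum hb logfA3_dnum0_lt0 hNb) as [xs [hxs hroot]].
  exists xs. split; [|assumption].
  destruct (Req_dec xs 0) as [e|]; [rewrite e in hroot; pose proof logfA3_dnum0_lt0 | ]; lra.
Qed.

Lemma fA3_lt_of_dnum_pos (x y : R) :
  0 < x -> x < y -> (forall z, x < z < y -> 0 < logfA3_dnum z) -> fA3 p c x < fA3 p c y.
Proof.
  intros hx hxy hpos. rewrite !fA3_exp. apply exp_increasing.
  apply (is_derive_pos_lt logfA3 (fun z => logfA3_dnum z / z ^ 2)); [assumption| |].
  - intros z hz. apply is_derive_logfA3. lra.
  - intros z hz. apply Rdiv_lt_0_compat; [auto | apply pow_lt; lra].
Qed.

Lemma fA3_lt_of_dnum_neg (x y : R) :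
  0 < x -> x < y -> (forall z, x < z < y -> logfA3_dnum z < 0) -> fA3 p c y < fA3 p c x.
Proof.
  intros hx hxy hneg. rewrite !fA3_exp. apply exp_increasing, Ropp_lt_cancel.
  apply (is_derive_pos_lt (fun z => - logfA3 z) (fun z => - (logfA3_dnum z / z ^ 2)));
    [assumption| |].
  - intros z hz. apply (is_derive_opp logfA3), is_derive_logfA3. lra.
  - intros z hz. pose proof (hneg z hz). assert (0 < z ^ 2) by (apply pow_lt; lra).
    assert (logfA3_dnum z / z ^ 2 < 0) by (apply Rdiv_neg_pos; assumption).
    lra.
Qed.

End Monotonicity.

Theorem claimA3 (p c : R) (hp0 : 0 < p) (hp1 : p < 1) (hc : 0 < c) :
  (p <= 1/2 ->
     forall x y : R, 0 < x -> x < y -> fA3 p c y < fA3 p c x) /\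
  (1/2 < p ->
     exists xs : R, 0 < xs /\
       (forall x y : R, 0 < x -> x < y -> y <= xs -> fA3 p c y < fA3 p c x) /\
       (forall x y : R, xs <= x -> x < y -> fA3 p c x < fA3 p c y)).
Proof.
  split.
  - intros hp x y hx hxy. apply (fA3_lt_of_dnum_neg p c hp0 hp1); try assumption.
    intros z hz. apply (logfA3_dnum_lt0 p c hp0 hp1 hc); lra.
  - intro hp. destruct (logfA3_dnum_root p c hp0 hp1 hc hp) as [xs [hxs hroot]].
    exists xs. split; [assumption | split].
    + intros x y hx hxy hy. apply (fA3_lt_of_dnum_neg p c hp0 hp1); try assumption.
      intros z hz. rewrite <- hroot. apply (logfA3_dnum_incr p c hp0 hp1 hc); lra.
    + intros x y hx hxy. apply (fA3_lt_of_dnum_pos p c hp0 hp1); [lra | assumption |].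
      intros z hz. rewrite <- hroot. apply (logfA3_dnum_incr p c hp0 hp1 hc); lra.
Qed.
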